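(* Let $X$ and $Y$ be Tychonoff spaces with $Y$ a $P$-space, and let $f:X\to Y$ be a meshing map which has a cross section. Then $f|_{N(X)}$ is a homeomorphism of $N(X)$ onto $N(Y)$.
   Context: A space $X$ is Menger if for each sequence $(\mathcal{U}_n)$ of open covers of $X$ there is a sequence $(\mathcal{V}_n)$ with each $\mathcal{V}_n$ a finite subset of $\mathcal{U}_n$ and $\bigcup_{n}\bigcup\mathcal{V}_n=X$. $X$ is locally Menger at $x$ if there are an open set $U$ and a Menger subspace $M$ of $X$ with $x\in U\subseteq M$; $N(X)$ denotes the set of points of $X$ at which $X$ is not locally Menger. A $P$-space is a space in which every countable intersection of open sets is open. A continuous surjection $f:X\to Y$ is a meshing map if there are compactifications $bX$ of $X$ and $cY$ of $Y$ and a continuous extension $\tilde f:bX\to cY$ of $f$ onto $cY$ such that $\tilde f|_{bX\setminus X}$ is a homeomorphism onto $cY\setminus Y$. A cross section of $f$ is a continuous map $g:Y\to X$ with $f\circ g=\mathrm{id}_Y$. *)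

From HB Require Import structures.
From mathcomp Require Import all_boot all_order all_algebra.
From mathcomp Require Import all_classical all_reals all_analysis.
From mathcomp Require Import Rstruct Rstruct_topology.
Set Implicit Arguments. Unset Strict Implicit. Unset Printing Implicit Defensive.
Local Open Scope classical_set_scope.

Definition tychonoff_space (T : topologicalType) : Prop :=
  accessible_space T /\
  forall (a : T) (B : set T), closed B -> ~ B a ->
    exists h : T -> Rdefinitions.R,
      continuous h /\ h a = 0%R /\ (forall b, B b -> h b = 1%R).

Definition homeo_on (S T : topologicalType) (A : set S) (B : set T)
    (f : S -> T) : Prop :=
  f @` A = B /\ {in A &, injective f} /\ {within A, continuous f} /\
  exists g : T -> S, g @` B `<=` A /\ (forall a, A a -> g (f a) = a) /\
    {within B, continuous g}.

Definition compactification (X bX : topologicalType) (e : X -> bX) : Prop :=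
  hausdorff_space bX /\ compact [set: bX] /\
  homeo_on [set: X] (range e) e /\ dense (range e).

Definition meshing (X Y : topologicalType) (f : X -> Y) : Prop :=
  continuous f /\ set_surj [set: X] [set: Y] f /\
  exists (bX cY : topologicalType) (eX : X -> bX) (eY : Y -> cY)
         (ft : bX -> cY),
    compactification eX /\ compactification eY /\
    continuous ft /\ (forall x, ft (eX x) = eY (f x)) /\
    set_surj [set: bX] [set: cY] ft /\
    homeo_on (~` range eX) (~` range eY) ft.

Definition cross_section (X Y : topologicalType) (f : X -> Y) (g : Y -> X)
  : Prop := continuous g /\ forall y, f (g y) = y.

Definition P_space (T : topologicalType) : Prop :=
  forall U : nat -> set T, (forall n, open (U n)) -> open (\bigcap_n U n).

(* The subspace M of X is Menger (covers by open sets of X, which is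
   equivalent to covers by relatively open sets of M). *)
Definition menger_subspace (T : topologicalType) (M : set T) : Prop :=
  forall U : nat -> set (set T),
    (forall n, (forall V, U n V -> open V) /\ M `<=` \bigcup_(V in U n) V) ->
    exists F : nat -> set (set T),
      (forall n, finite_set (F n) /\ F n `<=` U n) /\
      M `<=` \bigcup_n \bigcup_(V in F n) V.

Definition locally_menger_at (T : topologicalType) (x : T) : Prop :=
  exists (U M : set T), open U /\ menger_subspace M /\ U x /\ U `<=` M.

(* N(X): points at which X is not locally Menger. *)
Definition NLM (T : topologicalType) : set T := [set x | ~ locally_menger_at x].

From HB Require Import structures.
From mathcomp Require Import all_boot all_order all_algebra.
From mathcomp Require Import all_classical all_reals all_analysis.
From mathcomp Require Import finmap.
Set Implicit Arguments. Unset Strict Implicit. Unset Printing Implicit Defensive.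
Local Open Scope classical_set_scope.

(* A meshing map f is perfect: ft maps the remainder of bX injectively onto
   the remainder of cY, so every fibre of f is a compact fibre of ft, and f is
   closed.  Menger sets pull back along perfect maps and push forward along
   continuous ones, so f maps N(X) into N(Y) and the section g maps N(Y) into
   N(X).  It remains to show g (f x) = x on N(X).  If g (f x) <> x, take open
   A, B in bX with disjoint closures around eX x and eX (g (f x)).  As ft is
   injective off X, the compact set ft (cl A) `&` ft (cl B) lies in Y, so it is
   finite: compact subsets of a T1 P-space are finite.  Removing its points
   other than f x from A `&` f^-1 (g^-1 B) leaves a neighbourhood of x inside
   the compact fibre of f x, so X is locally Menger at x. *)

Definition fibers_compact (S T : topologicalType) (f : S -> T) : Prop :=
  forall y, compact (f @^-1` [set y]).

(* For any map this is equivalent to being closed (take V := ~` f @` ~` O). *)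
Definition fiberwise_closed (S T : topologicalType) (f : S -> T) : Prop :=
  forall y (O : set S), open O -> f @^-1` [set y] `<=` O ->
    exists V, [/\ open V, V y & f @^-1` V `<=` O].

(* [compact_cover] and [pcard_leP] need a pointed type; any point will do. *)
Definition pointed_at (T : topologicalType) (x : T) : Type := T.
HB.instance Definition _ (T : topologicalType) (x : T) :=
  Topological.copy (@pointed_at T x) T.
HB.instance Definition _ (T : topologicalType) (x : T) :=
  isPointed.Build (@pointed_at T x) x.

Lemma compact_finite_subset_cover (T : topologicalType) (M : set T)
    (I : choiceType) (D : set I) (f : I -> set T) :
  compact M -> (forall i, D i -> open (f i)) -> M `<=` cover D f ->
  finite_subset_cover D f M.
Proof.
move=> cM oD cov; have [->|/set0P [x Mx]] := eqVneq M set0.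
  by exists fset0 => // ? [].
have cMx : @compact (@pointed_at T x) M := cM.
by move: cMx; rewrite compact_cover; apply.
Qed.

Lemma compact_hausdorff_separate_closures (T : topologicalType) (p q : T) :
  hausdorff_space T -> compact [set: T] -> p != q ->
  exists A B : set T, [/\ open A, open B, A p, B q &
    closure A `&` closure B = set0].
Proof.
move=> hT cT pq.
move: (hT); rewrite open_hausdorff => /(_ p q pq).
move=> [[A1 B1] [/= /set_mem A1p /set_mem B1q] [oA1 oB1 A1B1]].
have shrink (r : T) (U : set T) : nbhs r U ->
    exists A, [/\ open A, A r & closure A `<=` U].
  move=> rU; have [W rW WU] := compact_regular hT cT filterT rU.
  exists W°; split; [exact: open_interior | exact: rW |].
  by apply: subset_trans WU; apply: closureS; apply: interior_subset.
have [A [oA Ap AA1]] := shrink p A1 (open_nbhs_nbhs (conj oA1 A1p)).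
have [B [oB Bq BB1]] := shrink q B1 (open_nbhs_nbhs (conj oB1 B1q)).
exists A, B; split => //; rewrite -subset0 -(eqP A1B1).
exact: setISS.
Qed.

Lemma P_space_compact_finite (T : topologicalType) (C : set T) :
  accessible_space T -> P_space T -> compact C -> finite_set C.
Proof.
move=> T1 PT cC; apply: contrapT => infC.
have [c0 Cc0] : C !=set0 := infinite_setN0 infC.
have : ([set: nat] #<= (C : set (@pointed_at T c0)))%card by apply/infiniteP.
move=> /pcard_leP/injfunPex [s sC sinj].
pose tail m := s @` [set n | (m <= n)%N].
have tail_closed m : closed (tail m).
  rewrite -openC.
  have -> : ~` tail m = \bigcap_n (if (m <= n)%N then ~` [set s n] else setT).
    apply/seteqP; split.
      move=> z ntail n _; case: ifPn => //= mn zsn.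
      by apply: ntail; exists n => //; rewrite zsn.
    by move=> z Hz [n /= mn snz]; have := Hz n I; rewrite /= mn; apply.
  apply: PT => n; case: ifP => _; last exact: openT.
  by rewrite openC; apply: accessible_closed_set1.
have cov : C `<=` cover [set: nat] (fun m => ~` tail m).
  move=> z Cz; have [[n0 sn0]|nz] := pselect (exists n, s n = z).
    exists n0.+1 => // -[n /= n0n sn].
    have n0E : n0 = n by apply: sinj; rewrite ?in_setT // sn sn0.
    by move: n0n; rewrite n0E ltnn.
  by exists 0%N => // -[n _ sn]; apply: nz; exists n.
have [D _ cD] :=
  compact_finite_subset_cover cC (fun m _ => closed_openC (tail_closed m)) cov.
have [i Di] := cD _ (sC (\max_(i <- D) i)%N I); apply.
by exists (\max_(i <- D) i)%N => //=; apply: leq_bigmax_seq.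
Qed.

Lemma compact_menger_subspace (T : topologicalType) (M : set T) :
  compact M -> menger_subspace M.
Proof.
move=> cM U hU; have [oU cov] := hU 0%N.
have [D sD cD] := compact_finite_subset_cover cM oU (cov : M `<=` cover _ id).
exists (fun n => if n is 0%N then [set` D] else set0); split.
  case=> [|n]; split; [exact: finite_fset | | exact: finite_set0 | by []].
  by move=> V /= VD; apply: set_mem (sD V VD).
by move=> x /cD [V VD Vx]; exists 0%N => //; exists V.
Qed.

Lemma menger_subspace_image (S T : topologicalType) (f : S -> T) (M : set S) :
  continuous f -> menger_subspace M -> menger_subspace (f @` M).
Proof.
move=> cf mM U hU.
pose W n := [set f @^-1` V | V in U n].
have hW n : (forall V, W n V -> open V) /\ M `<=` \bigcup_(V in W n) V.
  have [oU cU] := hU n; split.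
    by move=> _ [V UV <-]; apply: (iffLR (continuousP f)) cf _ (oU V UV).
  move=> x Mx; have [V UV Vfx] := cU (f x) (imageP f Mx).
  by exists (f @^-1` V) => //; exists V.
have [F [hF cF]] := mM W hW.
pose lift n (Z : set S) := xget set0 [set V | U n V /\ f @^-1` V = Z].
have liftP n Z : F n Z -> U n (lift n Z) /\ f @^-1` (lift n Z) = Z.
  move=> FZ; have [_ /(_ Z FZ) [V UV VZ]] := hF n.
  by apply: (@xgetPex _ _ [set V | U n V /\ f @^-1` V = Z]); exists V.
exists (fun n => lift n @` F n); split.
  move=> n; have [finF _] := hF n; split; first exact: finite_image.
  by move=> _ [Z FZ <-]; have [] := liftP n Z FZ.
move=> _ [x Mx <-]; have [n _ [Z FZ Zx]] := cF x Mx.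
exists n => //; exists (lift n Z); first by exists Z.
by have [_ ZE] := liftP n Z FZ; rewrite -ZE in Zx.
Qed.

Lemma menger_subspace_preimage (S T : topologicalType) (f : S -> T)
    (M : set T) :
  fibers_compact f -> fiberwise_closed f ->
  menger_subspace M -> menger_subspace (f @^-1` M).
Proof.
move=> cfib clf mM U hU.
pose refines n (V : set T) (Phi : set (set S)) :=
  [/\ finite_set Phi, Phi `<=` U n & f @^-1` V `<=` \bigcup_(W in Phi) W].
pose good n (V : set T) := open V /\ exists Phi, refines n V Phi.
have hG n : (forall V, good n V -> open V) /\
    M `<=` \bigcup_(V in good n) V.
  have [oU cU] := hU n; split; first by move=> V [].
  move=> y My.
  have fib_cov : f @^-1` [set y] `<=` cover (U n) id.
    by move=> x /= fxy; apply: cU; rewrite /= fxy.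
  have [D sD cD] := compact_finite_subset_cover (cfib y) oU fib_cov.
  have sDU : [set` D] `<=` U n by move=> W /= WD; apply: set_mem (sD W WD).
  have oD : open (\bigcup_(W in [set` D]) W).
    by apply: bigcup_open => W /sDU; apply: oU.
  have [V [oV Vy sV]] := clf y _ oD cD.
  exists V => //; split => //; exists [set` D].
  by split => //; apply: finite_fset.
have [F [hF cF]] := mM good hG.
pose Phi n V := xget set0 (refines n V).
have PhiP n V : F n V -> refines n V (Phi n V).
  by move=> FV; have [_ /(_ V FV) [_ ex]] := hF n; apply: (xgetPex _ ex).
exists (fun n => \bigcup_(V in F n) Phi n V); split.
  move=> n; have [finF _] := hF n; split.
    by apply: bigcup_finite => // V FV; have [] := PhiP n V FV.
  by move=> W [V FV PW]; have [_ + _] := PhiP n V FV; apply.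
move=> x /= Mfx; have [n _ [V FV Vfx]] := cF (f x) Mfx.
have [_ _ /(_ x Vfx) [W PW Wx]] := PhiP n V FV.
by exists n => //; exists W => //; exists V.
Qed.

Lemma locally_menger_at_preimage (S T : topologicalType) (f : S -> T) (x : S) :
  continuous f -> fibers_compact f -> fiberwise_closed f ->
  locally_menger_at (f x) -> locally_menger_at x.
Proof.
move=> cf cfib clf [U [M [oU [mM [Ufx UM]]]]].
exists (f @^-1` U), (f @^-1` M); split; first exact: (iffLR (continuousP f)).
split; first exact: menger_subspace_preimage.
by split => // x' /UM.
Qed.

Lemma locally_menger_at_section (S T : topologicalType) (f : S -> T)
    (g : T -> S) (y : T) :
  continuous f -> cross_section f g ->
  locally_menger_at (g y) -> locally_menger_at y.
Proof.
move=> cf [cg fg] [U [M [oU [mM [Ugy UM]]]]].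
exists (g @^-1` U), (f @` M); split; first exact: (iffLR (continuousP g)).
split; first exact: menger_subspace_image.
by split => // y' /UM Mgy'; exists (g y').
Qed.

Section Embedding.
Variables (X bX : topologicalType) (e : X -> bX).
Hypothesis he : homeo_on [set: X] (range e) e.

Lemma embedding_injective : injective e.
Proof. by case: he => _ [inj _] a b; apply: inj; rewrite in_setT. Qed.

Lemma embedding_continuous : continuous e.
Proof. by case: he => _ [_ [+ _]]; rewrite continuous_subspace_setT. Qed.

Lemma embedding_preimage_compact (K : set bX) :
  compact K -> K `<=` range e -> compact (e @^-1` K).
Proof.
case: he => _ [_ [_ [g [_ [ge cg]]]]] cK Ke.
have -> : e @^-1` K = g @` K.
  apply/seteqP; split; first by move=> x Kex; exists (e x); rewrite ?ge.
  by move=> _ [k Kk <-]; have [x _ xk] := Ke k Kk; rewrite /= -xk ge // xk.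
exact: continuous_compact (continuous_subspaceW Ke cg) cK.
Qed.

Lemma embedding_open_preimage (O : set X) :
  open O -> exists2 O', open O' & e @^-1` O' = O.
Proof.
case: he => _ [_ [_ [g [_ [ge cg]]]]] oO.
have /open_subspaceP [V oV VE] :=
  (iffLR (continuousP (g : subspace (range e) -> X))) cg O oO.
exists V => //; apply/seteqP; split => x /= xV.
  have : (V `&` range e) (e x) by split => //; exists x.
  by rewrite VE => -[/=]; rewrite ge.
have : ((g @^-1` O) `&` range e) (e x) by split; [rewrite /= ge | exists x].
by rewrite -VE => -[].
Qed.

End Embedding.

Lemma homeo_on_cross_section (S T : topologicalType) (f : S -> T) (g : T -> S)
    (A : set S) (B : set T) :
  continuous f -> cross_section f g ->
  f @` A `<=` B -> g @` B `<=` A -> (forall a, A a -> g (f a) = a) ->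
  homeo_on A B f.
Proof.
move=> cf [cg fg] fAB gBA gfA; split.
  apply/seteqP; split => // y By.
  by exists (g y); [apply: gBA; exists y | apply: fg].
split.
  move=> a b /set_mem Aa /set_mem Ab fab.
  by rewrite -(gfA a Aa) -(gfA b Ab) fab.
split; first exact: continuous_subspaceT.
by exists g; split => //; split => //; apply: continuous_subspaceT.
Qed.

Section Meshing.
Variables (X Y bX cY : topologicalType) (f : X -> Y).
Variables (eX : X -> bX) (eY : Y -> cY) (ft : bX -> cY).
Hypotheses (cpX : compactification eX) (cpY : compactification eY).
Hypotheses (cft : continuous ft) (ftE : forall x, ft (eX x) = eY (f x)).
Hypothesis ft_remainder : homeo_on (~` range eX) (~` range eY) ft.

Lemma meshing_range_reflect (c : bX) : range eY (ft c) -> range eX c.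
Proof.
case: ft_remainder => ftR _ ftc; apply: contrapT => nc.
have : (ft @` (~` range eX)) (ft c) by exists c.
by rewrite ftR.
Qed.

Lemma meshing_fibers_compact : fibers_compact f.
Proof.
case: cpX => _ [cbX [hX _]]; case: cpY => hcY [_ [hY _]] y.
have ft_fiber_closed : closed (ft @^-1` [set eY y]).
  apply: (iffLR (continuous_closedP ft)) cft _ _.
  exact: (accessible_closed_set1 (hausdorff_accessible hcY)).
have ft_fiberX : ft @^-1` [set eY y] `<=` range eX.
  by move=> c /= ftc; apply: meshing_range_reflect; rewrite ftc; exists y.
have -> : f @^-1` [set y] = eX @^-1` (ft @^-1` [set eY y]).
  apply/seteqP; split => x /=; rewrite ftE; first by move->.
  exact: (embedding_injective hY).
apply: embedding_preimage_compact ft_fiberX => //.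
exact: subclosed_compact ft_fiber_closed cbX (subsetT _).
Qed.

Lemma meshing_fiberwise_closed : fiberwise_closed f.
Proof.
case: cpX => _ [cbX [hX _]]; case: cpY => hcY [_ [hY _]] y U oU fibU.
have [W oW WE] := embedding_open_preimage hX oU.
have cWC : compact (ft @` (~` W)).
  apply: continuous_compact; first exact: continuous_subspaceT.
  by apply: subclosed_compact _ cbX (subsetT _); rewrite closedC.
exists (eY @^-1` (~` (ft @` (~` W)))); split.
- apply: (iffLR (continuousP eY)) (embedding_continuous hY) _ _.
  exact/closed_openC/(compact_closed hcY).
- move=> /= [c Wc ftc].
  have [x _ xc] : range eX c.
    by apply: meshing_range_reflect; rewrite ftc; exists y.
  have : U x by apply: fibU; apply: (embedding_injective hY); rewrite -ftE xc.
  by rewrite -WE /= xc.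
- move=> x /= nftW; apply: contrapT => nUx; apply: nftW.
  by exists (eX x); [move=> WeX; apply: nUx; rewrite -WE | exact: ftE].
Qed.

(* A point of cY off Y has a single preimage under ft, and it lies off X. *)
Lemma meshing_meet_images_in_range (A B : set bX) :
  closure A `&` closure B = set0 ->
  ft @` closure A `&` ft @` closure B `<=` range eY.
Proof.
move=> AB z [[a Aa az] [b Bb bz]]; apply: contrapT => nz.
have off_X c : ft c = z -> (~` range eX) c.
  by move=> cz [x _ xc]; apply: nz; exists (f x) => //; rewrite -ftE xc.
have ab : a = b.
  case: ft_remainder => _ [inj _].
  by apply: inj; rewrite ?in_setE ?az ?bz //; apply: off_X.
suff : (closure A `&` closure B) a by rewrite AB.
by split => //; rewrite ab.
Qed.

Lemma meshing_locally_menger_off_section (g : Y -> X) (x : X) :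
  continuous f -> accessible_space Y -> P_space Y -> cross_section f g ->
  g (f x) <> x -> locally_menger_at x.
Proof.
move=> cf T1 PY [cg fg] gfx.
case: (cpX) => hbX [cbX [hX _]]; case: (cpY) => hcY [_ [hY _]].
have ceX := embedding_continuous hX.
have eX_neq : eX x != eX (g (f x)).
  by apply/eqP => /(embedding_injective hX) /esym.
have [A [B [oA oB Ax Bgfx AB]]] :=
  compact_hausdorff_separate_closures hbX cbX eX_neq.
have image_closure_compact (Z : set bX) : compact (ft @` closure Z).
  apply: continuous_compact; first exact: continuous_subspaceT.
  exact: subclosed_compact (@closed_closure _ Z) cbX (subsetT _).
pose D := eY @^-1` (ft @` closure A `&` ft @` closure B) `\` [set f x].
have D_closed : closed D.
  apply: (iffLR accessible_finite_set_closed T1).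
  apply: sub_finite_set (@subDsetl _ _ _) (P_space_compact_finite T1 PY _).
  apply: (embedding_preimage_compact hY _ (meshing_meet_images_in_range AB)).
  apply: compact_closedI (image_closure_compact A) _.
  exact: compact_closed hcY (image_closure_compact B).
pose N := eX @^-1` A `&` f @^-1` (g @^-1` (eX @^-1` B)) `&` f @^-1` (~` D).
exists N, (f @^-1` [set f x]); split.
  apply: openI; first apply: openI; apply: (iffLR (continuousP _)) => //.
  - by apply: (iffLR (continuousP g)) cg _ _; apply: (iffLR (continuousP eX)).
  - exact: closed_openC.
split; first exact/compact_menger_subspace/meshing_fibers_compact.
split; first by split; [by [] | move=> [_]; apply].
move=> x' [[Ax' Bx'] nDx']; apply: contrapT => fx'; apply: nDx'; split => //.
split; first by exists (eX x'); [apply: subset_closure | rewrite ftE].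
by exists (eX (g (f x'))); [apply: subset_closure | rewrite ftE fg].
Qed.

Lemma meshing_homeo_on_NLM (g : Y -> X) :
  continuous f -> accessible_space Y -> P_space Y -> cross_section f g ->
  homeo_on (@NLM X) (@NLM Y) f.
Proof.
move=> cf T1 PY sec.
have gf_NLM x : NLM x -> g (f x) = x.
  move=> Nx; apply: contrapT => gfx; apply: Nx.
  exact: (meshing_locally_menger_off_section cf T1 PY sec).
apply: (homeo_on_cross_section cf sec _ _ gf_NLM).
- move=> _ [x Nx <-] Mfx; apply: Nx.
  apply: (locally_menger_at_preimage cf _ _ Mfx).
    exact: meshing_fibers_compact.
  exact: meshing_fiberwise_closed.
- by move=> _ [y Ny <-] Mgy; apply/Ny/(locally_menger_at_section cf sec).
Qed.

End Meshing.

Theorem theorem5p17 (X Y : topologicalType) (f : X -> Y) :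
  tychonoff_space X -> tychonoff_space Y -> P_space Y -> meshing f ->
  (exists g : Y -> X, cross_section f g) ->
  homeo_on (@NLM X) (@NLM Y) f.
Proof.
move=> _ [T1Y _] PY [cf [_ [bX [cY [eX [eY [ft mesh]]]]]]] [g sec].
have [cpX [cpY [cft [ftE [_ ft_remainder]]]]] := mesh.
exact: (meshing_homeo_on_NLM cpX cpY cft ftE ft_remainder cf T1Y PY sec).
Qed.
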